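(* Let $I$ be a weakly primary ideal of a ring $R$, and suppose $(\sqrt{I})^n\subseteq I$ for some positive integer $n$. Then $I$ is a weakly $n$-absorbing ideal of $R$.
   Context: All rings are commutative with $1\neq0$. A proper ideal $I$ of $R$ is weakly primary if whenever $a,b\in R$ and $0\neq ab\in I$, then $a\in I$ or $b\in\sqrt{I}$. A proper ideal $I$ is weakly $n$-absorbing if whenever $0\neq a_1\cdots a_{n+1}\in I$ with $a_1,\dots,a_{n+1}\in R$, there are $n$ of the $a_i$'s whose product is in $I$. *)

From mathcomp Require Import all_boot all_algebra.
Set Implicit Arguments. Unset Strict Implicit. Unset Printing Implicit Defensive.
Import GRing.Theory.
Local Open Scope ring_scope.

Section IdealDefs.
Variable R : comNzRingType.

Definition is_ideal (I : R -> Prop) : Prop :=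
  [/\ I 0, (forall x y, I x -> I y -> I (x + y)) & (forall r x, I x -> I (r * x))].

Definition proper_ideal (I : R -> Prop) : Prop := is_ideal I /\ ~ I 1.

Definition radical (I : R -> Prop) : R -> Prop := fun x => exists k : nat, I (x ^+ k).

Definition idealPow (J : R -> Prop) (n : nat) : R -> Prop :=
  fun x => exists (m : nat) (f : 'I_m -> 'I_n -> R),
    (forall k i, J (f k i)) /\ x = \sum_(k < m) \prod_(i < n) f k i.

Definition weakly_primary (I : R -> Prop) : Prop :=
  proper_ideal I /\
  forall a b : R, a * b != 0 -> I (a * b) -> I a \/ radical I b.

(* weakly n-absorbing: if 0 != a_1...a_{n+1} in I, then the product of some
   n of the a_i (i.e. all but one index j) is in I *)
Definition weakly_n_absorbing (n : nat) (I : R -> Prop) : Prop :=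
  proper_ideal I /\
  forall a : 'I_n.+1 -> R,
    \prod_(i < n.+1) a i != 0 -> I (\prod_(i < n.+1) a i) ->
    exists j : 'I_n.+1, I (\prod_(i < n.+1 | i != j) a i).
End IdealDefs.

(* If some factor a_j lies outside the radical, split the product as
   (product of the others) * a_j: weak primariness puts the other n factors in I.
   Otherwise every factor is in the radical, so the product of any n of them
   lies in (sqrt I)^n, which is contained in I. *)

From mathcomp Require Import all_boot all_algebra.
From Stdlib Require Import Classical.
Local Open Scope ring_scope.
Import GRing.Theory.

Lemma prodD1_lift (R : comPzSemiRingType) (n : nat) (j : 'I_n.+1) (a : 'I_n.+1 -> R) :
  \prod_(i < n.+1 | i != j) a i = \prod_(i < n) a (lift j i).
Proof.
rewrite big_mkcond (bigD1_ord j) //= eqxx mul1r.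
by apply: eq_bigr => i _; rewrite eq_sym neq_lift.
Qed.

Lemma idealPow_prod (R : comNzRingType) (J : R -> Prop) (n : nat) (f : 'I_n -> R) :
  (forall i, J (f i)) -> idealPow J n (\prod_(i < n) f i).
Proof. by move=> Jf; exists 1%N, (fun _ => f); rewrite big_ord1. Qed.

Lemma weakly_primary_prodD1 (R : comNzRingType) (I : R -> Prop) (n : nat)
    (a : 'I_n.+1 -> R) (j : 'I_n.+1) :
  weakly_primary I -> \prod_(i < n.+1) a i != 0 -> I (\prod_(i < n.+1) a i) ->
  ~ radical I (a j) -> I (\prod_(i < n.+1 | i != j) a i).
Proof.
move=> [_ wpI] prod_neq0 I_prod aj_notin.
have prod_split : \prod_(i < n.+1) a i = (\prod_(i < n.+1 | i != j) a i) * a j.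
  by rewrite (bigD1 j) //= mulrC.
rewrite prod_split in prod_neq0 I_prod.
by case: (wpI _ _ prod_neq0 I_prod).
Qed.

Theorem mainTheorem15 (R : comNzRingType) (I : R -> Prop) (n : nat) :
  (0 < n)%N -> weakly_primary I ->
  (forall x : R, idealPow (radical I) n x -> I x) ->
  weakly_n_absorbing n I.
Proof.
move=> _ wpI powI; split; first by case: wpI.
move=> a prod_neq0 I_prod.
have [[j aj_notin] | all_in] := classic (exists j, ~ radical I (a j)).
  by exists j; apply: weakly_primary_prodD1.
exists ord0; rewrite prodD1_lift; apply/powI/idealPow_prod => i.
by apply: NNPP => ai_notin; apply: all_in; exists (lift ord0 i).
Qed.
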